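(* Let $G=(\mathcal V,\mathcal E)$, $\chi$, $C$, $2\le m\le n$ and $\mathbb L_m$ be as in the context. Let $\mathcal R_1=\max_{\Gamma\in\mathbb L_m}\|\Gamma\|_1$, $\mathcal R_H=\max_{\Gamma,\Gamma'\in\mathbb L_m}\big(H(\Gamma)-H(\Gamma')\big)$, let $\mathcal V_m$ be the set of vertices of $\mathbb L_m$, let $\mathcal V_m^*\subseteq\mathcal V_m$ be the set of vertices minimizing $\langle C,\cdot\rangle$ over $\mathbb L_m$, and let $\Delta=\min_{V_1\in\mathcal V_m\setminus\mathcal V_m^*,\,V_2\in\mathcal V_m^*}\big(\langle C,V_1\rangle-\langle C,V_2\rangle\big)$. Suppose $\mathbb L_m$ is tight and $|\mathcal V_m^*|=1$. If $\eta\ge \frac{2\mathcal R_1\log(64\mathcal R_1)+2\mathcal R_1+2\mathcal R_H}{\Delta}$, then the rounded assignment $x\in\chi^n$ given by $x_i=\arg\max_{x'\in\chi}(\Gamma_\eta^* )_i(x')$ for each $i\in\mathcal V$ is a MAP assignment, i.e. it maximizes $\sum_{i\in\mathcal V}\theta_i(x_i)+\sum_{ij\in\mathcal E}\theta_{ij}(x_i,x_j)$ over $\chi^n$.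
   Context: A pairwise graphical model has vertex set $\mathcal V=\{1,\dots,n\}$, edge set $\mathcal E$ (each vertex lies on at least one edge), and state set $\chi=\{0,\dots,d-1\}$, with potentials $\theta_i:\chi\to\mathbb R$ ($i\in\mathcal V$) and $\theta_{ij}:\chi^2\to\mathbb R$ ($ij\in\mathcal E$). The cost is $C=-\theta$. For $2\le m\le n$, the Sherali–Adams polytope $\mathbb L_m$ is the set of collections $\Gamma=(\Gamma_S)_{S\subseteq\mathcal V,\,1\le|S|\le m}$ of nonnegative functions $\Gamma_S:\chi^S\to[0,\infty)$, each summing to $1$, such that for $S\subset T$ marginalizing $\Gamma_T$ over the variables in $T\setminus S$ gives $\Gamma_S$; write $\Gamma_i=\Gamma_{\{i\}}$ and $\Gamma_{ij}(x_i,x_j)=\Gamma_{\{i,j\}}(x_i,x_j)$. The cost $C$ is extended to all coordinates with value $0$ on subsets that are neither singletons nor edges, and $\langle C,\Gamma\rangle=\sum_i\sum_{x}C_i(x)\Gamma_i(x)+\sum_{ij\in\mathcal E}\sum_{x_i,x_j}C_{ij}(x_i,x_j)\Gamma_{ij}(x_i,x_j)$. $\|\Gamma\|_1$ is the sum of absolute values of all entries. The entropy is $H(\Gamma)=\sum(\Gamma(-\log\Gamma+1))$ summed over all entries. For $\eta>0$, $\Gamma_\eta^*$ denotes the minimizer of $\langle C,\Gamma\rangle-\frac1\eta H(\Gamma)$ over $\Gamma\in\mathbb L_m$. $\mathbb L_m$ is called tight if the linear program $\max_{\Gamma\in\mathbb L_m}\langle\theta,\Gamma\rangle$ has an integral (all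 entries in $\{0,1\}$) optimal solution. *)

From HB Require Import structures.
From mathcomp Require Import all_boot all_order all_algebra.
From mathcomp Require Import reals exp.
Set Implicit Arguments. Unset Strict Implicit. Unset Printing Implicit Defensive.
Import Order.TTheory GRing.Theory Num.Theory.
Local Open Scope ring_scope.

(* A coordinate (S, x_S) with
   x_S in chi^S is encoded as a partial assignment y : 'I_n -> option 'I_d
   whose support {i | y i != None} is S. *)
Definition pa (n d : nat) := {ffun 'I_n -> option 'I_d}.

Definition supp n d (y : pa n d) : {set 'I_n} := [set i | y i != None].

Definition valid (m : nat) n d (y : pa n d) : bool :=
  (1 <= #|supp y|)%N && (#|supp y| <= m)%N.

Definition pt1 n d (i : 'I_n) (a : 'I_d) : pa n d :=
  [ffun k => if k == i then Some a else None].
Definition pt2 n d (i j : 'I_n) (a b : 'I_d) : pa n d :=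
  [ffun k => if k == i then Some a else if k == j then Some b else None].

Definition agrees n d (S : {set 'I_n}) (z y : pa n d) : bool :=
  [forall i in S, z i == y i].

(* Sherali-Adams polytope L_m.  Vectors are functions on all partial
   assignments, required to vanish on non-coordinates (so that equality of
   vectors is equality of their coordinates). *)
Definition SA_poly (R : realType) (n d m : nat) (G : pa n d -> R) : Prop :=
  [/\ (forall y, ~~ valid m y -> G y = 0),
      (forall y, valid m y -> 0 <= G y),
      (forall S : {set 'I_n}, (1 <= #|S|)%N -> (#|S| <= m)%N ->
          \sum_(y : pa n d | supp y == S) G y = 1) &
      (forall S T : {set 'I_n}, S \proper T -> (1 <= #|S|)%N -> (#|T| <= m)%N ->
          forall y : pa n d, supp y = S ->
            G y = \sum_(z : pa n d | (supp z == T) && agrees S z y) G z)].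

(* <c, Gamma> for node potentials c1 and edge potentials c2;
   edges are ordered pairs (i, j) with i < j. *)
Definition inner (R : realType) n d (E : {set 'I_n * 'I_n})
    (c1 : 'I_n -> 'I_d -> R) (c2 : 'I_n -> 'I_n -> 'I_d -> 'I_d -> R)
    (G : pa n d -> R) : R :=
  \sum_(i : 'I_n) \sum_(a : 'I_d) c1 i a * G (pt1 i a)
  + \sum_(e in E) \sum_(a : 'I_d) \sum_(b : 'I_d)
        c2 e.1 e.2 a b * G (pt2 e.1 e.2 a b).

Definition costC (R : realType) n d (E : {set 'I_n * 'I_n})
    (th1 : 'I_n -> 'I_d -> R) (th2 : 'I_n -> 'I_n -> 'I_d -> 'I_d -> R)
    (G : pa n d -> R) : R :=
  inner E (fun i a => - th1 i a) (fun i j a b => - th2 i j a b) G.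

Definition norm1 (R : realType) n d m (G : pa n d -> R) : R :=
  \sum_(y : pa n d | valid m y) `|G y|.

(* H(Gamma) = sum Gamma (-log Gamma + 1)  (ln 0 = 0, so 0 log 0 = 0) *)
Definition entropy (R : realType) n d m (G : pa n d -> R) : R :=
  \sum_(y : pa n d | valid m y) G y * (- ln (G y) + 1).

Definition is_vertex (R : realType) n d m (V : pa n d -> R) : Prop :=
  SA_poly m V /\
  forall (G1 G2 : pa n d -> R) (t : R), SA_poly m G1 -> SA_poly m G2 ->
    0 < t < 1 -> V = (fun y => t * G1 y + (1 - t) * G2 y) -> G1 = G2.

Definition is_opt_vertex (R : realType) n d m (E : {set 'I_n * 'I_n})
    th1 th2 (V : pa n d -> R) : Prop :=
  is_vertex m V /\
  forall G, SA_poly m G -> costC E th1 th2 V <= costC E th1 th2 G.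

Definition tight (R : realType) n d m (E : {set 'I_n * 'I_n})
    (th1 : 'I_n -> 'I_d -> R) th2 : Prop :=
  exists G : pa n d -> R,
    [/\ SA_poly m G,
        (forall y, valid m y -> G y = 0 \/ G y = 1) &
        forall G', SA_poly m G' -> inner E th1 th2 G' <= inner E th1 th2 G].

Definition score (R : realType) n d (E : {set 'I_n * 'I_n})
    (th1 : 'I_n -> 'I_d -> R) (th2 : 'I_n -> 'I_n -> 'I_d -> 'I_d -> R)
    (x : 'I_n -> 'I_d) : R :=
  \sum_(i : 'I_n) th1 i (x i) + \sum_(e in E) th2 e.1 e.2 (x e.1) (x e.2).

Definition is_MAP (R : realType) n d E th1 th2 (x : 'I_n -> 'I_d) : Prop :=
  forall x' : 'I_n -> 'I_d,
    @score R n d E th1 th2 x' <= score E th1 th2 x.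

Definition graph_ok n (E : {set 'I_n * 'I_n}) : Prop :=
  (forall e, e \in E -> (e.1 < e.2)%N) /\
  (forall i : 'I_n, exists2 e, e \in E & (e.1 = i \/ e.2 = i)).

(* Every point of L_m is (1 - eps) V* + eps Q with Q in L_m and eps Delta at
   most its excess cost over V*: by induction on the support, a non-vertex
   splits into two points of L_m of smaller support, and every vertex other
   than V* costs at least Delta more.  Applied to an integral optimum this
   shows that V* is integral, i.e. the indicator vector of an assignment x*.
   For Gamma*_eta, moving half of the weight eps from Q back to V* lowers the
   cost by at least eps Delta / 2, while by concavity of the entropy it lowers
   H by at most (eps / 2) (R_1 log (2 / eps) + R_H + R_1).  Optimality of
   Gamma*_eta and the bound on eta then force eps < 1/2, so every node
   marginal of Gamma*_eta puts more than half of its mass on x*_i: rounding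
   recovers x*, which is MAP because V* is optimal. *)

From mathcomp Require Import all_boot all_order all_algebra.
From mathcomp Require Import reals exp boolp.
From mathcomp.algebra_tactics Require Import ring lra.
Import Order.TTheory GRing.Theory Num.Theory.
Local Open Scope ring_scope.
Set Implicit Arguments. Unset Strict Implicit.

Section EntropyTerm.
Variable R : realType.
Implicit Types a b t q v : R.

Definition hent (u : R) : R := u * (- ln u + 1).

Lemma hent_01 v : v = 0 \/ v = 1 -> hent v = v.
Proof. by rewrite /hent => -[] ->; rewrite ?mul0r ?ln1 ?oppr0 ?add0r ?mul1r. Qed.

Lemma hent_ge0 q : 0 <= q <= 1 -> 0 <= hent q.
Proof.
move=> /andP[q0 q1]; apply: mulr_ge0 => //.
by apply: addr_ge0 => //; rewrite oppr_ge0 ln_le0.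
Qed.

(* Concavity of [hent], whose derivative is [- ln]; the side condition is
   needed because [ln 0 = 0]. *)
Lemma hent_tangent a b : 0 <= a -> 0 <= b -> (a = 0 -> b = 0) ->
  hent b - hent a <= - ln a * (b - a).
Proof.
rewrite /hent => a0 b0 ab.
have [a0e|] := eqVneq a 0; first by rewrite (ab a0e) a0e !mul0r subrr mulr0.
rewrite neq_lt ltNge a0 /= => ap.
have [->|] := eqVneq b 0; first by rewrite mul0r sub0r; nra.
rewrite neq_lt ltNge b0 /= => bp.
have : ln (a / b) <= a / b - 1.
  have := @le_ln1Dx R (a / b - 1); rewrite addrCA subrr addr0; apply.
  by rewrite ltrBrDl subrr divr_gt0.
rewrite ln_div ?posrE // => /(ler_wpM2l (ltW bp)).
have -> : b * (a / b - 1) = a - b by field; rewrite gt_eqF.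
lra.
Qed.

Lemma tangent_at_mix_le t v q : 0 < t < 1 -> v = 0 \/ v = 1 -> 0 <= q <= 1 ->
  - ln (t * q + (1 - t) * v) * (q - v) <= - ln t * q + hent q.
Proof.
move=> /andP[t0 t1] hv q01; have /andP[q0 q1] := q01.
have lt0 : 0 <= - ln t by rewrite oppr_ge0 ln_le0 // ltW.
have hq := hent_ge0 q01.
case: hv => ->.
  rewrite mulr0 addr0 subr0 /hent.
  have [->|] := eqVneq q 0; first by rewrite !(mulr0, mul0r) addr0.
  rewrite neq_lt ltNge q0 /= => qp.
  rewrite lnM ?posrE // opprD; nra.
rewrite mulr1.
have l0 : 0 <= - ln (t * q + (1 - t)) by rewrite oppr_ge0 ln_le0 //; nra.
nra.
Qed.

End EntropyTerm.

Section Polytope.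
Variables (R : realType) (n d m : nat).
Implicit Types (A B G : pa n d -> R) (y z : pa n d).

Lemma SA_ge0 G y : SA_poly m G -> 0 <= G y.
Proof. by case=> Gi Gn _ _; have [/Gn|/Gi ->] := boolP (valid m y). Qed.

Lemma SA_le1 G y : SA_poly m G -> valid m y -> G y <= 1.
Proof.
move=> sG /andP[h1 h2]; have [_ _ Gs _] := sG.
rewrite -(Gs (supp y) h1 h2) (bigD1 y) //= lerDl.
by apply: sumr_ge0 => z _; exact: SA_ge0.
Qed.

Definition integral G := forall y, valid m y -> G y = 0 \/ G y = 1.

Definition mix (s : R) A B : pa n d -> R := fun y => s * A y + (1 - s) * B y.

Lemma SA_mix_nonneg A B s : SA_poly m A -> SA_poly m B ->
  (forall y, valid m y -> 0 <= mix s A B y) -> SA_poly m (mix s A B).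
Proof.
case=> [Ai An As Am] [Bi Bn Bs Bm] nn; split => //.
- by move=> y hy; rewrite /mix Ai // Bi // !mulr0 addr0.
- by move=> S h1 h2; rewrite big_split /= -!mulr_sumr As // Bs // !mulr1 subrKC.
- move=> S T ST h1 h2 y hy; rewrite big_split /= -!mulr_sumr.
  by rewrite /mix -(Am S T) // -(Bm S T).
Qed.

Lemma SA_mix A B s : SA_poly m A -> SA_poly m B -> 0 <= s <= 1 ->
  SA_poly m (mix s A B).
Proof.
move=> sA sB /andP[s0 s1]; apply: SA_mix_nonneg => // y _.
by have := SA_ge0 y sA; have := SA_ge0 y sB; rewrite /mix; nra.
Qed.

Lemma costC_mix E th1 th2 A B s :
  costC E th1 th2 (mix s A B) = s * costC E th1 th2 A + (1 - s) * costC E th1 th2 B.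
Proof.
rewrite /costC /inner !mulrDr addrACA !mulr_sumr -!big_split; congr (_ + _).
  apply: eq_bigr => i _; rewrite !mulr_sumr -big_split.
  by apply: eq_bigr => a _ /=; rewrite /mix; ring.
apply: eq_bigr => e _; rewrite !mulr_sumr -big_split; apply: eq_bigr => a _ /=.
by rewrite !mulr_sumr -big_split; apply: eq_bigr => b _ /=; rewrite /mix; ring.
Qed.

Lemma costC_inner E th1 th2 G : costC E th1 th2 G = - inner E th1 th2 G.
Proof.
rewrite /costC /inner opprD -!sumrN; congr (_ + _).
  by apply: eq_bigr => i _; rewrite -sumrN; apply: eq_bigr => a _; ring.
apply: eq_bigr => e _; rewrite -sumrN; apply: eq_bigr => a _.
by rewrite -sumrN; apply: eq_bigr => b _; ring.
Qed.

Lemma in_supp y k : (k \in supp y) = (y k != None).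
Proof. by rewrite inE. Qed.

Lemma supp_pt1 (i : 'I_n) (a : 'I_d) : supp (pt1 i a) = [set i].
Proof. by apply/setP => k; rewrite in_supp ffunE inE; case: (k == i). Qed.

Lemma valid_pt1 (i : 'I_n) (a : 'I_d) : (1 <= m)%N -> valid m (pt1 i a).
Proof. by move=> hm; rewrite /valid supp_pt1 cards1. Qed.

Lemma pt1_inj (i : 'I_n) : injective (@pt1 n d i).
Proof. by move=> a b /(congr1 (fun y : pa n d => y i)); rewrite !ffunE eqxx => -[]. Qed.

Lemma supp1_pt1 y (i : 'I_n) : supp y = [set i] -> exists a, y = pt1 i a.
Proof.
move=> sy; have : i \in supp y by rewrite sy inE.
rewrite in_supp; case ey: (y i) => [a|] // _; exists a.
apply/ffunP => k; rewrite ffunE; case: ifP => [/eqP -> //|ki].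
by apply/eqP; rewrite -[_ == _]negbK -in_supp sy inE ki.
Qed.

Lemma sum_supp1 G (i : 'I_n) :
  \sum_(y | supp y == [set i]) G y = \sum_(a : 'I_d) G (pt1 i a).
Proof.
transitivity (\sum_(y in [set pt1 i a | a : 'I_d]) G y).
  apply: eq_bigl => y; apply/eqP/imsetP => [/supp1_pt1 [a ->]|[a _ ->]].
    by exists a.
  exact: supp_pt1.
by rewrite big_imset //; move=> a b _ _; apply: pt1_inj.
Qed.

Lemma SA_pt1_sum G (i : 'I_n) : SA_poly m G -> (1 <= m)%N ->
  \sum_(a : 'I_d) G (pt1 i a) = 1.
Proof. by case=> _ _ Gs _ hm; rewrite -sum_supp1 Gs ?cards1. Qed.

Lemma SA_pt1_le G y k a : SA_poly m G -> valid m y -> y k = Some a ->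
  G y <= G (pt1 k a).
Proof.
move=> sG /andP[_ h2] yk; have [_ _ _ Gm] := sG.
have kin : k \in supp y by rewrite in_supp yk.
have [e|ne] := eqVneq (supp y) [set k].
  by have [b ey] := supp1_pt1 e; move: yk; rewrite ey ffunE eqxx => -[->].
have pr : [set k] \proper supp y by rewrite properEneq eq_sym ne sub1set kin.
rewrite (Gm _ _ pr _ h2 _ (supp_pt1 k a)) ?cards1 // (bigD1 y) /=; last first.
  rewrite eqxx /=; apply/forall_inP => k'; rewrite inE => /eqP ->.
  by rewrite yk ffunE eqxx.
by rewrite lerDl; apply: sumr_ge0 => z _; exact: SA_ge0.
Qed.

Lemma SA_norm1_ge1 G (i : 'I_n) : SA_poly m G -> (1 <= m)%N -> 1 <= norm1 m G.
Proof.
move=> sG hm; rewrite /norm1 (bigID (fun y => supp y == [set i])) /=.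
rewrite -[1]addr0; apply: lerD; last by apply: sumr_ge0 => y _.
rewrite -(SA_pt1_sum i sG hm) -sum_supp1 le_eqVlt; apply/orP; left.
have supp1_valid y : valid m y && (supp y == [set i]) = (supp y == [set i]).
  by have [e|_] := eqVneq (supp y) [set i]; rewrite ?andbF // /valid e cards1 hm.
rewrite eq_sym (eq_bigl _ _ supp1_valid).
by apply/eqP/eq_bigr => y _; rewrite ger0_norm //; exact: SA_ge0.
Qed.

End Polytope.

Section NonVertex.
Variables (R : realType) (n d m : nat).
Implicit Types (A B G : pa n d -> R) (y z : pa n d).

Definition nnz G := #|[set y | G y != 0]|.

Lemma SA_neq_lt A B y0 : SA_poly m A -> SA_poly m B -> A y0 != B y0 ->
  exists y, A y < B y.
Proof.
move=> sA sB ne; apply: contrapT => /forallNP noLt.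
have BA z : B z <= A z by rewrite leNgt; apply/negP/noLt.
have [vy0|nv] := boolP (valid m y0); last first.
  by have [Ai _ _ _] := sA; have [Bi _ _ _] := sB; rewrite Ai // Bi // eqxx in ne.
have {}ne : B y0 < A y0 by rewrite lt_neqAle eq_sym ne BA.
have /andP[h1 h2] := vy0; case: sA => _ _ As _; case: sB => _ _ Bs _.
have := As _ h1 h2; have := Bs _ h1 h2.
rewrite (bigD1 y0) //= [X in _ -> X = _ -> _](bigD1 y0) //= => eB eA.
have : B y0 + \sum_(z | (supp z == supp y0) && (z != y0)) B z <
       A y0 + \sum_(z | (supp z == supp y0) && (z != y0)) A z.
  by apply: ltr_leD => //; apply: ler_sum.
by rewrite eA eB ltxx.
Qed.

(* Moving from [t] towards [A] stays in L_m up to the first parameter [s] at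
   which a coordinate with [A y < B y] vanishes; there the support shrinks. *)
Lemma SA_push A B t : SA_poly m A -> SA_poly m B -> 0 < t < 1 ->
  (exists y, A y < B y) ->
  exists s, [/\ t < s, SA_poly m (mix s A B) &
                (nnz (mix s A B) < nnz (mix t A B))%N].
Proof.
move=> sA sB /andP[t0 t1] [y0 hy0].
pose L := mix t A B.
pose f y := L y / (B y - A y).
have [ys /= hys ysmin] := @arg_minP _ _ _ y0 [pred y | A y < B y] f hy0.
have A0 y : 0 <= A y by exact: SA_ge0 y sA.
have B0 y : 0 <= B y by exact: SA_ge0 y sB.
have L0 y : 0 <= L y by have := A0 y; have := B0 y; rewrite /L /mix /=; nra.
have L0_AB y : L y = 0 -> A y = 0 /\ B y = 0.
  by move=> h; have := A0 y; have := B0 y; rewrite /L /mix /= in h; split; nra.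
have Lys : 0 < L ys by have := A0 ys; have := B0 ys; rewrite /L /mix /=; nra.
have fys : f ys * (B ys - A ys) = L ys by rewrite /f divfK // gt_eqF // subr_gt0.
have fys0 : 0 < f ys by rewrite /f divr_gt0 // subr_gt0.
have eL s y : mix s A B y = L y + (s - t) * (A y - B y) by rewrite /L /mix; ring.
have ds : t + f ys - t = f ys by ring.
exists (t + f ys); rewrite ltrDl fys0; split => //.
  apply: SA_mix_nonneg => // y _; rewrite eL ds.
  have [lty|] := ltP (A y) (B y); last by have := L0 y; nra.
  by have := ysmin y lty; rewrite /f ler_pdivlMr ?subr_gt0 //; nra.
rewrite /nnz; apply: proper_card; apply/properP; split.
  apply/subsetP => y; rewrite !inE; apply: contra => /eqP h.
  by have [Ay By] := L0_AB y h; rewrite /mix Ay By !mulr0 addr0.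
exists ys; rewrite !inE; first by rewrite -/(L ys) gt_eqF.
by rewrite negbK eL ds -fys; apply/eqP; ring.
Qed.

Lemma SA_nonvertex_split G : SA_poly m G -> ~ is_vertex m G ->
  exists A B l, [/\ SA_poly m A /\ SA_poly m B, 0 < l < 1,
    (nnz A < nnz G)%N, (nnz B < nnz G)%N & G = mix l A B].
Proof.
move=> sG nvG.
have [G1 [G2 [t [s1 s2 t01 eG neq]]]] : exists G1 G2 t,
    [/\ SA_poly m G1, SA_poly m G2, 0 < t < 1, G = mix t G1 G2 & G1 <> G2].
  apply: contrapT => H; apply: nvG; split => // G1 G2 t s1 s2 t01 eG.
  by apply: contrapT => neq; apply: H; exists G1, G2, t.
have [y0 ne] : exists y0, G1 y0 != G2 y0.
  apply: contrapT => /forallNP H; apply: neq; apply: funext => y.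
  by apply/eqP; rewrite -[_ == _]negbK; apply/negP/H.
have [s [ts sA nA]] := SA_push s1 s2 t01 (SA_neq_lt s1 s2 ne).
have t01' : 0 < 1 - t < 1 by case/andP: t01 => t0 t1; apply/andP; lra.
have ne' : G2 y0 != G1 y0 by rewrite eq_sym.
have [r [tr sB nB]] := SA_push s2 s1 t01' (SA_neq_lt s2 s1 ne').
have eG' : mix (1 - t) G2 G1 = G by apply: funext => y; rewrite eG /mix; ring.
rewrite -eG in nA; rewrite eG' in nB.
case/andP: t01 => t0 t1.
have dp : 0 < s - (1 - r) by lra.
pose l := (t - (1 - r)) / (s - (1 - r)).
exists (mix s G1 G2), (mix r G2 G1), l; split => //.
  by apply/andP; rewrite divr_gt0 ?ltr_pdivrMr //=; lra.
have et : t = (1 - r) + l * (s - (1 - r)) by rewrite /l divfK ?gt_eqF //; ring.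
by rewrite eG; apply: funext => y; rewrite /mix et; ring.
Qed.

End NonVertex.

Section OptimalDecomposition.
Variables (R : realType) (n d m : nat) (E : {set 'I_n * 'I_n}).
Variables (th1 : 'I_n -> 'I_d -> R) (th2 : 'I_n -> 'I_n -> 'I_d -> 'I_d -> R).
Variables (Delta : R) (Vs : pa n d -> R).
Hypothesis optVs : is_opt_vertex m E th1 th2 Vs.
Hypothesis uniqVs : forall W, is_opt_vertex m E th1 th2 W -> W = Vs.
Hypothesis gapDelta : forall V1 V2 : pa n d -> R, is_vertex m V1 ->
  ~ is_opt_vertex m E th1 th2 V1 -> is_opt_vertex m E th1 th2 V2 ->
  Delta <= costC E th1 th2 V1 - costC E th1 th2 V2.

Local Notation cost := (costC E th1 th2).

Definition decomposable (G : pa n d -> R) := exists eps (Q : pa n d -> R),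
  [/\ 0 <= eps <= 1, SA_poly m Q, G = mix eps Q Vs &
      eps * Delta <= cost G - cost Vs].

Lemma SA_Vs : SA_poly m Vs.
Proof. by case: optVs => -[]. Qed.

Lemma decomposable_mix A B l : decomposable A -> decomposable B -> 0 <= l <= 1 ->
  decomposable (mix l A B).
Proof.
move=> [eA [QA [/andP[eA0 eA1] sQA -> cA]]] [eB [QB [/andP[eB0 eB1] sQB -> cB]]].
move=> /andP[l0 l1]; set e := l * eA + (1 - l) * eB.
have e01 : 0 <= e <= 1 by apply/andP; split; rewrite /e; nra.
have [w [w01 ew]] : exists w, 0 <= w <= 1 /\ e * w = l * eA.
  have lA0 : 0 <= l * eA by rewrite mulr_ge0.
  have lB0 : 0 <= (1 - l) * eB by rewrite mulr_ge0 // subr_ge0.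
  have [e0|e_neq0] := eqVneq e 0.
    exists 1; rewrite e0 mul0r lexx ler01; split => //.
    by move: e0; rewrite /e; lra.
  have ep : 0 < e by rewrite lt_neqAle eq_sym e_neq0 (andP e01).1.
  exists (l * eA / e); split; last by rewrite mulrC divfK.
  apply/andP; split; first by rewrite divr_ge0 // ltW.
  by rewrite ler_pdivrMr // mul1r /e; lra.
exists e, (mix w QA QB); split => //; first exact: SA_mix.
  apply: funext => y; rewrite /mix /=.
  have -> : e * (w * QA y + (1 - w) * QB y) = e * w * QA y + (e - e * w) * QB y.
    by ring.
  by rewrite ew /e; ring.
rewrite [cost (mix l _ _)]costC_mix.
have -> : l * cost (mix eA QA Vs) + (1 - l) * cost (mix eB QB Vs) - cost Vs =
  l * (cost (mix eA QA Vs) - cost Vs) + (1 - l) * (cost (mix eB QB Vs) - cost Vs).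
  by ring.
have -> : e * Delta = l * (eA * Delta) + (1 - l) * (eB * Delta) by rewrite /e; ring.
by apply: lerD; apply: ler_wpM2l; rewrite ?subr_ge0.
Qed.

Lemma SA_decomposable G : SA_poly m G -> decomposable G.
Proof.
elim: {G}(nnz G).+1 {-2}G (ltnSn (nnz G)) => [//|k IH] G ltGk sG.
have [vG|nvG] := pselect (is_vertex m G); last first.
  have [A [B [l [[sA sB] /andP[l0 l1] ltA ltB ->]]]] := SA_nonvertex_split sG nvG.
  apply: decomposable_mix; rewrite ?ltW //.
    exact: IH (leq_trans ltA ltGk) sA.
  exact: IH (leq_trans ltB ltGk) sB.
have [oG|noG] := pselect (is_opt_vertex m E th1 th2 G).
  exists 0, Vs; rewrite lexx ler01 (uniqVs oG) mul0r subrr; split => //.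
  - exact: SA_Vs.
  - by apply: funext => y; rewrite /mix; ring.
exists 1, G; rewrite lexx ler01 mul1r; split => //.
- by apply: funext => y; rewrite /mix; ring.
- exact: gapDelta vG noG optVs.
Qed.

Lemma opt_vertex_integral : 0 < Delta -> tight m E th1 th2 -> integral m Vs.
Proof.
move=> Delta0 [G0 [sG0 int0 max0]].
have [eps [Q [/andP[eps0 _] _ eG0 gap]]] := SA_decomposable sG0.
have : cost G0 <= cost Vs by rewrite !costC_inner lerN2; apply: max0 SA_Vs.
rewrite -subr_le0 => /(le_trans gap); rewrite pmulr_lle0 // => eps_le0.
have eps_eq0 : eps = 0 by apply/le_anti; rewrite eps_le0 eps0.
have -> : Vs = G0 by rewrite eG0 eps_eq0; apply: funext => y; rewrite /mix; ring.
exact: int0.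
Qed.

End OptimalDecomposition.

Lemma sum01_eq1 (R : realDomainType) (I : finType) (F : I -> R) :
  (forall i, F i = 0 \/ F i = 1) -> \sum_i F i = 1 ->
  exists i0, forall i, F i = (i == i0)%:R.
Proof.
move=> F01 sum1.
have [i0 Fi0] : exists i0, F i0 != 0.
  apply: contrapT => /forallNP F0; move: sum1; rewrite big1 => [/eqP|i _].
    by rewrite eq_sym oner_eq0.
  by apply/eqP; rewrite -[_ == _]negbK; apply/negP/F0.
have {}Fi0 : F i0 = 1 by case: (F01 i0) => // e; rewrite e eqxx in Fi0.
exists i0 => i; have [->|ne] := eqVneq i i0; first by rewrite Fi0.
case: (F01 i) => // Fi; move: sum1; rewrite (bigD1 i0) // (bigD1 i) //= Fi0 Fi.
have : 0 <= \sum_(j | (j != i0) && (j != i)) F j.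
  by apply: sumr_ge0 => j _; case: (F01 j) => ->.
lra.
Qed.

Section AssignmentPoint.
Variables (R : realType) (n d m : nat).
Implicit Types (G : pa n d -> R) (y z : pa n d) (f : 'I_n -> 'I_d).

Definition consistent f y := [forall k in supp y, y k == Some (f k)].

Definition assign_pt f : pa n d -> R := fun y => (valid m y && consistent f y)%:R.

Definition restr f (S : {set 'I_n}) : pa n d :=
  [ffun k => if k \in S then Some (f k) else None].

Lemma supp_restr f S : supp (restr f S) = S.
Proof. by apply/setP => k; rewrite in_supp ffunE; case: (k \in S). Qed.

Lemma consistent_restr f S : consistent f (restr f S).
Proof. by apply/forall_inP => k; rewrite supp_restr => kS; rewrite ffunE kS. Qed.

Lemma consistent_eq_restr f y : consistent f y -> y = restr f (supp y).
Proof.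
move/forall_inP => h; apply/ffunP => k; rewrite ffunE.
by case: ifP => [/h/eqP //|]; rewrite in_supp => /negbFE/eqP.
Qed.

Lemma agrees_consistent f y z (S : {set 'I_n}) : consistent f z -> agrees S z y ->
  supp y = S -> S \subset supp z -> consistent f y.
Proof.
move=> /forall_inP cz /forall_inP ag sy sS; apply/forall_inP => k.
by rewrite sy => kS; rewrite -(eqP (ag k kS)); apply: cz; exact: (subsetP sS).
Qed.

Lemma consistent_agrees f y z (S : {set 'I_n}) : consistent f y -> consistent f z ->
  supp y = S -> S \subset supp z -> agrees S z y.
Proof.
move=> /forall_inP cy /forall_inP cz sy sS; apply/forall_inP => k kS.
by rewrite (eqP (cz k (subsetP sS k kS))) (eqP (cy k _)) // sy.
Qed.

Lemma assign_pt_supp f y : consistent f y -> (1 <= #|supp y| <= m)%N ->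
  \sum_(z | supp z == supp y) assign_pt f z = 1.
Proof.
move=> cy vy; rewrite (bigD1 y) //= /assign_pt [valid _ _]vy cy /= big1 ?addr0 //.
move=> z /andP[/eqP sz ne]; have [cz|] := boolP (consistent f z); last by rewrite andbF.
by move: ne; rewrite (consistent_eq_restr cz) (consistent_eq_restr cy) sz eqxx.
Qed.

Lemma SA_assign_pt f : SA_poly m (assign_pt f).
Proof.
split.
- by move=> y /negbTE vy; rewrite /assign_pt vy.
- by move=> y _; exact: ler0n.
- move=> S h1 h2; have := assign_pt_supp (consistent_restr f S).
  by rewrite supp_restr h1 h2; apply.
move=> S T ST h1 h2 y sy; have ltST := proper_card ST.
have [cy|ncy] := boolP (consistent f y); last first.
  rewrite /assign_pt (negbTE ncy) andbF big1 // => z /andP[/eqP sz ag].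
  have [cz|] := boolP (consistent f z); last by rewrite andbF.
  by move: ncy; rewrite (agrees_consistent cz ag sy) // sz proper_sub.
have vT : (1 <= #|T| <= m)%N by rewrite h2 (leq_trans h1 (ltnW ltST)).
have -> : assign_pt f y = 1.
  by rewrite /assign_pt /valid sy h1 (leq_trans (ltnW ltST) h2) cy.
rewrite -[X in X = _](assign_pt_supp (consistent_restr f T)) supp_restr ?vT //.
rewrite [RHS]big_mkcondr /=; apply: eq_bigr => z /eqP sz.
have [cz|/negbTE ncz] := boolP (consistent f z); last first.
  by rewrite /assign_pt ncz andbF; case: ifP.
by rewrite (consistent_agrees cy cz sy) // sz proper_sub.
Qed.

Lemma assign_pt_pt1 f i a : (1 <= m)%N -> assign_pt f (pt1 i a) = (a == f i)%:R.
Proof.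
move=> hm; rewrite /assign_pt valid_pt1 //=; congr (nat_of_bool _)%:R.
apply/forall_inP/eqP => [/(_ i)|-> k].
  by rewrite supp_pt1 inE eqxx ffunE eqxx => /(_ erefl) /eqP [].
by rewrite supp_pt1 inE => /eqP ->; rewrite ffunE eqxx.
Qed.

Lemma supp_pt2 (i j : 'I_n) (a b : 'I_d) : supp (pt2 i j a b) = [set i; j].
Proof.
by apply/setP => k; rewrite in_supp ffunE !inE; case: (k == i); case: (k == j).
Qed.

Lemma assign_pt_pt2 f i j a b : i != j -> (2 <= m)%N ->
  assign_pt f (pt2 i j a b) = ((a == f i) && (b == f j))%:R.
Proof.
move=> ij hm; rewrite /assign_pt /valid supp_pt2 cards2 ij hm /=.
congr (nat_of_bool _)%:R.
have ji : (j == i) = false by rewrite eq_sym (negbTE ij).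
apply/forall_inP/andP => [H|[/eqP ea /eqP eb] k].
  have := H i; have := H j; rewrite supp_pt2 !inE !eqxx orbT !ffunE eqxx ji eqxx.
  by move=> /(_ erefl) /eqP [->] /(_ erefl) /eqP [->]; rewrite !eqxx.
by rewrite supp_pt2 !inE ffunE => /orP[] /eqP ->; rewrite ?eqxx ?ji ?ea ?eb.
Qed.

Lemma inner_assign_pt (E : {set 'I_n * 'I_n}) th1 th2 f :
  (forall e, e \in E -> e.1 != e.2) -> (2 <= m)%N ->
  inner E th1 th2 (assign_pt f) = score E th1 th2 f.
Proof.
move=> hE hm; have hm1 : (1 <= m)%N by apply: leq_trans hm.
rewrite /inner /score; congr (_ + _).
  apply: eq_bigr => i _; rewrite (bigD1 (f i)) //= assign_pt_pt1 // eqxx mulr1.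
  by rewrite big1 ?addr0 // => a /negbTE na; rewrite assign_pt_pt1 // na mulr0.
apply: eq_bigr => e /hE e12; rewrite (bigD1 (f e.1)) //= [X in _ + X]big1 ?addr0.
  rewrite (bigD1 (f e.2)) //= assign_pt_pt2 // !eqxx mulr1 big1 ?addr0 // => b /negbTE nb.
  by rewrite assign_pt_pt2 // nb andbF mulr0.
by move=> a /negbTE na; apply: big1 => b _; rewrite assign_pt_pt2 // na mulr0.
Qed.

Lemma SA_inconsistent_eq0 G f z : SA_poly m G ->
  (forall i a, G (pt1 i a) = (a == f i)%:R) ->
  valid m z -> ~~ consistent f z -> G z = 0.
Proof.
move=> sG Gpt1 vz /forall_inPn [k]; rewrite in_supp; case ezk: (z k) => [a|] // _ ne.
have : G z <= G (pt1 k a) := SA_pt1_le sG vz ezk.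
rewrite Gpt1 (_ : (a == f k) = false); last by apply/eqP => e; rewrite e eqxx in ne.
by move=> Gz0; apply/eqP; rewrite eq_le Gz0 (SA_ge0 z sG).
Qed.

Lemma SA_eq_assign_pt G f : SA_poly m G ->
  (forall i a, G (pt1 i a) = (a == f i)%:R) -> G = assign_pt f.
Proof.
move=> sG Gpt1; apply: funext => y; have [Gi _ Gs _] := sG.
have [vy|nvy] := boolP (valid m y); last by rewrite Gi // /assign_pt (negbTE nvy).
have [cy|ncy] := boolP (consistent f y); last first.
  by rewrite /assign_pt (negbTE ncy) andbF; exact: SA_inconsistent_eq0.
have /andP[h1 h2] := vy.
rewrite /assign_pt vy cy -(Gs _ h1 h2) (bigD1 y) //= big1 ?addr0 //.
move=> z /andP[/eqP sz ne].
apply: (SA_inconsistent_eq0 sG Gpt1); first by rewrite /valid sz.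
by apply: contra ne => cz; rewrite (consistent_eq_restr cz) (consistent_eq_restr cy) sz.
Qed.

Lemma SA_integral_assign_pt G : SA_poly m G -> (1 <= m)%N -> integral m G ->
  exists f, G = assign_pt f.
Proof.
move=> sG hm G01.
have [f Gpt1] : exists f, forall i a, G (pt1 i a) = (a == f i)%:R.
  apply: (@fin_all_exists _ (fun=> 'I_d)
    (fun i fi => forall a, G (pt1 i a) = (a == fi)%:R)) => i.
  by apply: sum01_eq1 (SA_pt1_sum i sG hm) => a; apply/G01/valid_pt1.
by exists f; apply: SA_eq_assign_pt.
Qed.

Lemma mix_assign_pt_argmax Q eps f (x : 'I_n -> 'I_d) : SA_poly m Q -> (1 <= m)%N ->
  0 <= eps -> eps < 2^-1 ->
  (forall i a, mix eps Q (assign_pt f) (pt1 i a)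
                 <= mix eps Q (assign_pt f) (pt1 i (x i))) ->
  x = f.
Proof.
move=> sQ hm eps0 eps_lt xmax; apply: funext => i; apply/eqP/contraT => ne.
have := xmax i (f i); rewrite /mix !assign_pt_pt1 // eqxx (negbTE ne) /=.
have := SA_le1 sQ (valid_pt1 i (x i) hm).
have := SA_ge0 (pt1 i (f i)) sQ.
nra.
Qed.

End AssignmentPoint.

Section EntropicRegularization.
Variables (R : realType) (n d m : nat) (E : {set 'I_n * 'I_n}).
Variables (th1 : 'I_n -> 'I_d -> R) (th2 : 'I_n -> 'I_n -> 'I_d -> 'I_d -> R).
Implicit Types (G V Q : pa n d -> R).

Local Notation cost := (costC E th1 th2).

Definition reg_cost (eta : R) G := cost G - eta^-1 * entropy m G.

Lemma entropy_integral V : integral m V -> entropy m V = norm1 m V.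
Proof.
move=> V01; apply: eq_bigr => y vy; have V01y := V01 y vy.
by rewrite -/(hent (V y)) hent_01 //; case: V01y => ->; rewrite ?normr0 ?normr1.
Qed.

Lemma entropy_mix_gap V Q eps t : SA_poly m V -> SA_poly m Q -> integral m V ->
  0 < t < eps -> eps <= 1 ->
  entropy m (mix eps Q V) - entropy m (mix t Q V)
    <= (eps - t) * (- ln t * norm1 m Q + entropy m Q).
Proof.
move=> sV sQ V01 /andP[t0 teps] eps1.
have t1 : t < 1 by apply: lt_le_trans eps1.
rewrite /norm1 /entropy -sumrB mulr_sumr -big_split mulr_sumr /=.
apply: ler_sum => y vy; rewrite -/(hent (Q y)).
have V0 := SA_ge0 y sV; have Q0 := SA_ge0 y sQ.
apply: le_trans (hent_tangent _ _ _) _.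
- by rewrite /mix; nra.
- by rewrite /mix; nra.
- by rewrite /mix => h; nra.
have -> : mix eps Q V y - mix t Q V y = (eps - t) * (Q y - V y) by rewrite /mix; ring.
rewrite mulrCA; apply: ler_wpM2l; first by rewrite subr_ge0 ltW.
rewrite ger0_norm // /mix.
apply: tangent_at_mix_le; [exact/andP | exact: V01 | by rewrite Q0 (SA_le1 sQ vy)].
Qed.

Lemma reg_minimizer_cost_gap V Q eps eta t :
  SA_poly m V -> SA_poly m Q -> integral m V -> 0 < t < eps -> eps <= 1 -> 0 < eta ->
  (forall G, SA_poly m G -> reg_cost eta (mix eps Q V) <= reg_cost eta G) ->
  eta * (cost Q - cost V) <= - ln t * norm1 m Q + entropy m Q.
Proof.
move=> sV sQ V01 /andP[t0 teps] eps1 eta0 Gmin.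
have et : 0 < eps - t by rewrite subr_gt0.
have t01 : 0 <= t <= 1 by rewrite ltW //= ltW // (lt_le_trans teps eps1).
have := Gmin _ (SA_mix sQ sV t01); rewrite /reg_cost !costC_mix => opt.
have Hgap := entropy_mix_gap sV sQ V01 (introT andP (conj t0 teps)) eps1.
have eta'0 : 0 <= eta^-1 by rewrite invr_ge0 ltW.
have : (eps - t) * (cost Q - cost V) <=
       eta^-1 * ((eps - t) * (- ln t * norm1 m Q + entropy m Q)).
  by apply: le_trans (ler_wpM2l eta'0 Hgap); move: opt; rewrite mulrBr; lra.
move=> /(ler_wpM2l (ltW eta0)).
by rewrite mulVKf ?gt_eqF // mulrCA ler_pM2l.
Qed.

Lemma reg_minimizer_weight_lt_half V Q eps eta (R1 RH Delta : R) (i0 : 'I_n) :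
  (1 <= m)%N -> SA_poly m V -> SA_poly m Q -> integral m V -> 0 <= eps <= 1 ->
  (forall G, SA_poly m G -> norm1 m G <= R1) ->
  (forall G G', SA_poly m G -> SA_poly m G' -> entropy m G - entropy m G' <= RH) ->
  0 < Delta -> eps * Delta <= cost (mix eps Q V) - cost V -> 0 < eta ->
  (forall G, SA_poly m G -> reg_cost eta (mix eps Q V) <= reg_cost eta G) ->
  (2 * R1 * ln (64 * R1) + 2 * R1 + 2 * RH) / Delta <= eta ->
  eps < 2^-1.
Proof.
move=> m1 sV sQ V01 /andP[eps0 eps1] R1max RHmax Delta0 gap eta0 Gmin eta_ge.
rewrite ltNge; apply/negP => eps_ge.
have R1_ge1 : 1 <= R1 := le_trans (SA_norm1_ge1 i0 sV m1) (R1max _ sV).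
have RH0 : 0 <= RH by have := RHmax _ _ sV sV; rewrite subrr.
pose t := eps / 2.
have t_eps : 0 < t < eps by apply/andP; rewrite /t; lra.
have gapQ : Delta <= cost Q - cost V.
  rewrite -(ler_pM2l (_ : 0 < eps)); last by lra.
  by move: gap; rewrite costC_mix; lra.
have key := reg_minimizer_cost_gap sV sQ V01 t_eps eps1 eta0 Gmin.
have nQ := R1max _ sQ.
have nQ0 : 0 <= norm1 m Q by apply: sumr_ge0 => y _.
have HQ : entropy m Q <= RH + R1.
  by have := RHmax _ _ sQ sV; have := R1max _ sV; rewrite (entropy_integral V01); lra.
have lnt0 : 0 <= - ln t by rewrite oppr_ge0 ln_le0 // /t; lra.
have lnt : - ln t <= ln (64 * R1).
  rewrite -subr_ge0 opprK -lnM ?posrE /t; try lra.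
  by apply: ln_ge0; nra.
have lnQ : - ln t * norm1 m Q <= ln (64 * R1) * R1 by apply: ler_pM.
have etaD : eta * Delta <= eta * (cost Q - cost V) by rewrite ler_pM2l.
move: eta_ge; rewrite ler_pdivrMr //; nra.
Qed.

Lemma opt_assign_pt_MAP f : graph_ok E -> (2 <= m)%N ->
  (forall G, SA_poly m G -> cost (assign_pt R m f) <= cost G) ->
  is_MAP E th1 th2 f.
Proof.
move=> [Elt _] m2 fopt x'.
have Eneq e : e \in E -> e.1 != e.2 by move/Elt; rewrite neq_ltn => ->.
have := fopt _ (SA_assign_pt R m x').
by rewrite !costC_inner !inner_assign_pt // lerN2.
Qed.

End EntropicRegularization.

Theorem theorem1 (R : realType) (n d m : nat) (E : {set 'I_n * 'I_n})
    (th1 : 'I_n -> 'I_d -> R) (th2 : 'I_n -> 'I_n -> 'I_d -> 'I_d -> R)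
    (R1 RH Delta eta : R) (Gs : pa n d -> R) (x : 'I_n -> 'I_d) :
  graph_ok E ->
  (2 <= m)%N -> (m <= n)%N ->
  (* R_1 = max_{Gamma in L_m} ||Gamma||_1 *)
  (exists2 G : pa n d -> R, SA_poly m G & norm1 m G = R1) ->
  (forall G : pa n d -> R, SA_poly m G -> norm1 m G <= R1) ->
  (* R_H = max_{Gamma, Gamma' in L_m} (H Gamma - H Gamma') *)
  (exists G G' : pa n d -> R, [/\ SA_poly m G, SA_poly m G' & entropy m G - entropy m G' = RH]) ->
  (forall G G' : pa n d -> R, SA_poly m G -> SA_poly m G' -> entropy m G - entropy m G' <= RH) ->
  (* Delta = min over V1 in V_m \ V_m^*, V2 in V_m^* of <C,V1> - <C,V2> *)
  (exists V1 V2 : pa n d -> R, [/\ is_vertex m V1, ~ is_opt_vertex m E th1 th2 V1,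
                     is_opt_vertex m E th1 th2 V2 &
                     costC E th1 th2 V1 - costC E th1 th2 V2 = Delta]) ->
  (forall V1 V2 : pa n d -> R, is_vertex m V1 -> ~ is_opt_vertex m E th1 th2 V1 ->
     is_opt_vertex m E th1 th2 V2 ->
     Delta <= costC E th1 th2 V1 - costC E th1 th2 V2) ->
  (* L_m tight and |V_m^*| = 1 *)
  tight m E th1 th2 ->
  (exists V : pa n d -> R, is_opt_vertex m E th1 th2 V /\
     forall W : pa n d -> R, is_opt_vertex m E th1 th2 W -> W = V) ->
  (* Gs = Gamma*_eta, the minimizer of <C,.> - H/eta over L_m *)
  0 < eta ->
  SA_poly m Gs ->
  (forall G : pa n d -> R, SA_poly m G ->
     costC E th1 th2 Gs - eta^-1 * entropy m Gs
       <= costC E th1 th2 G - eta^-1 * entropy m G) ->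
  (2 * R1 * ln (64 * R1) + 2 * R1 + 2 * RH) / Delta <= eta ->
  (* x is a rounding: x_i is an argmax of (Gs)_i *)
  (forall (i : 'I_n) (a : 'I_d), Gs (pt1 i a) <= Gs (pt1 i (x i))) ->
  is_MAP E th1 th2 x.
Proof.
move=> Egraph m2 mn _ R1max _ RHmax [V1 [V2 [vV1 nV1 oV2 eD]]] gap tightE
  [Vs [optVs uniqVs]] eta0 sGs Gsmin eta_ge xmax.
have m1 : (1 <= m)%N by apply: leq_trans m2.
have i0 : 'I_n := Ordinal (leq_trans m1 mn).
have Delta0 : 0 < Delta.
  rewrite -eD subr_gt0 ltNge; apply/negP => le12; apply: nV1; split => // G sG.
  by apply: le_trans le12 _; case: oV2 => _; apply.
have sVs := SA_Vs optVs.
have Vs01 := opt_vertex_integral optVs uniqVs gap Delta0 tightE.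
have [xs eVs] := SA_integral_assign_pt sVs m1 Vs01.
have [eps [Q [eps01 sQ eGs gapGs]]] := SA_decomposable optVs uniqVs gap sGs.
rewrite eGs in Gsmin gapGs xmax.
have eps_lt := reg_minimizer_weight_lt_half i0 m1 sVs sQ Vs01 eps01 R1max RHmax
  Delta0 gapGs eta0 Gsmin eta_ge.
rewrite eVs in xmax.
have [eps0 _] := andP eps01.
have -> := mix_assign_pt_argmax sQ m1 eps0 eps_lt xmax.
by apply: opt_assign_pt_MAP Egraph m2 _; rewrite -eVs; case: optVs.
Qed.
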